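(* Assume $q\neq0$. For all integers $n,r,s$, $$h_{n+s}h_{n-r}-h_nh_{n-r+s}=Eq^{n-r}\left(v_{r+s}-q^sv_{r-s}\right).$$
   Context: Let $p,q,a,b$ be complex numbers with $q\neq 0$, and let $E=b^2-abp+a^2q$. The sequence $(v_n)$ is defined by $v_0=2$, $v_1=p$, $v_n=pv_{n-1}-qv_{n-2}$. The Horadam-Lucas sequence $(h_n)$ is defined by $h_0=2b-ap$, $h_1=bp-2aq$, $h_n=ph_{n-1}-qh_{n-2}$. Both are extended to all integer indices by $x_{n-2}=(px_{n-1}-x_n)/q$. *)

(* Complex numbers are modelled as R[i] = complex R for R : realType
   (from mathcomp-real-closed), i.e. the genuine field C when R is the reals. *)
From HB Require Import structures.
From mathcomp Require Import all_boot all_order all_algebra.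
From mathcomp Require Import complex.
From mathcomp Require Import reals.
Set Implicit Arguments. Unset Strict Implicit. Unset Printing Implicit Defensive.
Import Order.TTheory GRing.Theory Num.Theory.
Local Open Scope ring_scope.

Section Seqs.
Variable K : fieldType.
Variables (p q x0 x1 : K).

(* fwd_pair n = (x_n, x_{n+1}) for n >= 0, using x_n = p x_{n-1} - q x_{n-2} *)
Fixpoint fwd_pair (n : nat) : K * K :=
  match n with
  | 0%N => (x0, x1)
  | k.+1 => let pr := fwd_pair k in (pr.2, p * pr.2 - q * pr.1)
  end.

(* bwd_pair n = (x_{-n}, x_{-n+1}) for n >= 0, using x_{m-2} = (p x_{m-1} - x_m)/q *)
Fixpoint bwd_pair (n : nat) : K * K :=
  match n with
  | 0%N => (x0, x1)
  | k.+1 => let pr := bwd_pair k in ((p * pr.1 - pr.2) / q, pr.1)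
  end.

Definition lrec (n : int) : K :=
  match n with
  | Posz k => (fwd_pair k).1
  | Negz k => (bwd_pair k.+1).1  (* Negz k = -(k+1) *)
  end.
End Seqs.

Definition vseq (K : fieldType) (p q : K) : int -> K := lrec p q 2 p.
Definition hseq (K : fieldType) (p q a b : K) : int -> K :=
  lrec p q (2 * b - a * p) (b * p - 2 * a * q).
Definition Econst (K : fieldType) (p q a b : K) : K := b ^+ 2 - a * b * p + a ^+ 2 * q.

(* Both sides of the identity, as functions of s, solve the recurrence
   x_(k+2) = p x_(k+1) - q x_k (on the right because k |-> q^k x_(c-k) solves it
   whenever x does), so they agree once they agree at s = 0 and s = 1.  At s = 0
   both vanish.  At s = 1 the left side is the Casoratian of the solutions
   k |-> h_(k+r) and h at k = n - r; a Casoratian is multiplied by q at each step,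
   so this is q^(n-r) times its value at k = 0, which is compared with
   E (v_(r+1) - q v_(r-1)) by the same two-point argument, now in r. *)

From HB Require Import structures.
From mathcomp Require Import all_boot all_order all_algebra.
From mathcomp Require Import complex.
From mathcomp Require Import reals.
From mathcomp Require Import ring zify.
Set Implicit Arguments. Unset Strict Implicit. Unset Printing Implicit Defensive.
Import GRing.Theory.
Local Open Scope ring_scope.

Section LinearRecurrence.
Variables (K : fieldType) (p q : K).
Hypothesis q_neq0 : q != 0.

Definition lrec_solution (x : int -> K) :=
  forall k, x (k + 2) = p * x (k + 1) - q * x k.

Lemma lrec_solution_lrec x0 x1 : lrec_solution (lrec p q x0 x1).
Proof.
(* k = -1 is the only index where the forward and backward pairs interact. *)
case=> [m|[|m]].
- have -> : m%:Z + 2 = m.+2 by lia.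
  by have -> : m%:Z + 1 = m.+1 by lia.
- have -> : Negz 0 + 2 = 1 by lia.
  have -> : Negz 0 + 1 = 0 by lia.
  by rewrite /=; field.
- have -> : Negz m.+1 + 2 = - m%:Z by lia.
  have -> : Negz m.+1 + 1 = Negz m by lia.
  by case: m => [|m] /=; field.
Qed.

Lemma lrec_solution_shift x c : lrec_solution x -> lrec_solution (fun k => x (k + c)).
Proof. by move=> solx k; rewrite addrAC solx addrAC. Qed.

Lemma lrec_solution_reflect x c :
  lrec_solution x -> lrec_solution (fun k => q ^ k * x (c - k)).
Proof.
move=> solx k; have := solx (c - (k + 2)).
have -> : c - (k + 2) + 2 = c - k by lia.
have -> : c - (k + 2) + 1 = c - (k + 1) by lia.
move=> xck; rewrite xck !expfzDr // expr1z.
suff -> : x (c - (k + 2)) = (p * x (c - (k + 1)) - x (c - k)) / q by field.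
by rewrite xck; field.
Qed.

Lemma lrec_solution_eq0 x :
  lrec_solution x -> x 0 = 0 -> x 1 = 0 -> forall k, x k = 0.
Proof.
move=> solx x0 x1.
suff H k : x k = 0 /\ x (k + 1) = 0 by move=> k; case: (H k).
elim/int_rec: k => [|m [xm xm1] | m [xm xm1]]; first by [].
- have -> : m.+1%:Z = m%:Z + 1 by lia.
  by split=> //; rewrite -addrA solx xm xm1 !mulr0 subrr.
- have -> : - m.+1%:Z + 1 = - m%:Z by lia.
  split=> //; have := solx (- m.+1%:Z).
  have -> : - m.+1%:Z + 2 = - m%:Z + 1 by lia.
  have -> : - m.+1%:Z + 1 = - m%:Z by lia.
  rewrite xm xm1 mulr0 sub0r => /esym /eqP.
  by rewrite oppr_eq0 mulf_eq0 (negPf q_neq0) => /eqP.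
Qed.

Lemma lrec_solution_eq x y : lrec_solution x -> lrec_solution y ->
  x 0 = y 0 -> x 1 = y 1 -> forall k, x k = y k.
Proof.
move=> solx soly e0 e1 k; apply/eqP; rewrite -subr_eq0; apply/eqP.
apply: (lrec_solution_eq0 (x := fun k => x k - y k)) => [j||].
- by rewrite solx soly; ring.
- by rewrite e0 subrr.
- by rewrite e1 subrr.
Qed.

Lemma geometric_int (D : int -> K) :
  (forall k, D (k + 1) = q * D k) -> forall k m, D k = q ^ (k - m) * D m.
Proof.
move=> DS k m; rewrite -{1}(subrK m k) addrC; move: (k - m) => d.
elim/int_rec: d => [|d IHd|d IHd]; first by rewrite addr0 expr0z mul1r.
- have -> : d.+1%:Z = d%:Z + 1 by lia.
  by rewrite addrA DS IHd expfzDr // expr1z; ring.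
- apply: (mulfI q_neq0); rewrite -DS -addrA.
  have -> : - d.+1%:Z + 1 = - d%:Z by lia.
  rewrite IHd; have -> : - d%:Z = - d.+1%:Z + 1 by lia.
  by rewrite expfzDr // expr1z; ring.
Qed.

Definition casoratian (x y : int -> K) k := x (k + 1) * y k - x k * y (k + 1).

Lemma casoratian_geometric x y : lrec_solution x -> lrec_solution y ->
  forall k m, casoratian x y k = q ^ (k - m) * casoratian x y m.
Proof.
move=> solx soly; apply: geometric_int => k.
by rewrite /casoratian -addrA solx soly; ring.
Qed.

End LinearRecurrence.

Section HoradamLucas.
Variables (K : fieldType) (p q a b : K).
Hypothesis q_neq0 : q != 0.
Let h := hseq p q a b.
Let v := vseq p q.
Let E := Econst p q a b.

Let solh : lrec_solution p q h := lrec_solution_lrec p q_neq0 _ _.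
Let solv : lrec_solution p q v := lrec_solution_lrec p q_neq0 _ _.

Lemma hseq_casoratian0 r : h (r + 1) * h 0 - h r * h 1 = E * (v (r + 1) - q * v (r - 1)).
Proof.
move: r; apply: (lrec_solution_eq (p := p) q_neq0) => [r|r||].
- have -> : r + 2 + 1 = r + 1 + 2 by lia.
  by rewrite !solh; ring.
- have -> : r + 2 + 1 = r + 1 + 2 by lia.
  have -> : r + 2 - 1 = r - 1 + 2 by lia.
  have -> : r + 1 - 1 = r - 1 + 1 by lia.
  by rewrite !solv; ring.
- by rewrite /= /v /E /Econst /=; field.
- by rewrite /h /v /hseq /vseq /E /Econst /=; ring.
Qed.

Lemma hseq_cross1 n r :
  h (n + 1) * h (n - r) - h n * h (n - r + 1) = E * q ^ (n - r) * (v (r + 1) - q * v (r - 1)).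
Proof.
have := casoratian_geometric q_neq0 (lrec_solution_shift r solh) solh (n - r) 0.
rewrite /casoratian subr0 subrK.
have -> : n - r + 1 + r = n + 1 by lia.
have -> : 0 + 1 + r = r + 1 by lia.
by rewrite add0r hseq_casoratian0 => ->; ring.
Qed.

Lemma hseq_cross n r s : h (n + s) * h (n - r) - h n * h (n - r + s)
  = E * q ^ (n - r) * (v (r + s) - q ^ s * v (r - s)).
Proof.
have solw := lrec_solution_reflect q_neq0 r solv.
move: s; apply: (lrec_solution_eq (p := p) q_neq0) => [s|s||].
- by rewrite !(addrA _ s) !solh; ring.
- by rewrite (addrA r) solv solw /= !addrA; ring.
- by rewrite !addr0 subrr expr0z mul1r subrr mulr0.
- by rewrite expr1z hseq_cross1.
Qed.

End HoradamLucas.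

Local Open Scope complex_scope.

Theorem mainTheorem9 (R : realType) (p q a b : R[i]) (hq : q != 0) (n r s : int) :
  hseq p q a b (n + s) * hseq p q a b (n - r)
    - hseq p q a b n * hseq p q a b (n - r + s)
  = Econst p q a b * q ^ (n - r) * (vseq p q (r + s) - q ^ s * vseq p q (r - s)).
Proof. exact: hseq_cross. Qed.
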